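(* Let $G(V,E)$ be any graph, $p\in(0,1)$, and let $\mathrm{OPT}=\mathbb{E}[\mu(G_p)]$. Then $G$ contains a $\lfloor 1/p\rfloor$-matching with at least $(\lfloor 1/p\rfloor-1)\cdot \mathrm{OPT}$ edges.
   Context: A realization $G_p$ of $G$ is the random subgraph obtained by keeping each edge of $G$ independently with probability $p$; $\mu(X)$ is the maximum matching size of a graph $X$. For an integer $b\ge 1$, a (simple) $b$-matching in $G$ is a subset of edges of $G$ such that every vertex is incident to at most $b$ of them; its size is its number of edges. *)

From HB Require Import structures.
From mathcomp Require Import all_boot all_order all_algebra.
Set Implicit Arguments. Unset Strict Implicit. Unset Printing Implicit Defensive.
Import Order.TTheory GRing.Theory Num.Theory.

Definition simple_graph (V : finType) (E : {set {set V}}) : Prop :=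
  forall e, e \in E -> #|e| = 2%N.

Definition is_bmatching (V : finType) (b : nat) (M : {set {set V}}) : bool :=
  [forall v : V, #|[set e in M | v \in e]| <= b].

Definition is_matching (V : finType) (M : {set {set V}}) : bool :=
  is_bmatching 1 M.

Definition mu (V : finType) (X : {set {set V}}) : nat :=
  \max_(M : {set {set V}} | (M \subset X) && is_matching M) #|M|.

(* E[ mu(G_p) ]: each edge kept independently with probability p. *)
Definition expected_mu (R : numDomainType) (V : finType)
    (E : {set {set V}}) (p : R) : R :=
  (\sum_(S : {set {set V}} | S \subset E)
     p ^+ #|S| * (1 - p) ^+ (#|E| - #|S|) * (mu S)%:R)%R.

From HB Require Import structures.
From mathcomp Require Import all_boot all_order all_algebra.
Import Order.TTheory GRing.Theory Num.Theory.
Set Implicit Arguments. Unset Strict Implicit. Unset Printing Implicit Defensive.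
Local Open Scope ring_scope.

(* Let b = floor(1/p), so that b p <= 1. Label every edge independently: with
   probability p each it gets one of the labels 1, ..., b, and label 0 with the
   remaining probability 1 - b p. Each class of edges with a fixed label j >= 1
   is then distributed exactly as G_p, so the expected sum over j >= 1 of the
   maximum matching sizes of the classes is b OPT. Fix a labelling reaching at
   least this mean; the union of maximum matchings of its b (disjoint) classes
   is a b-matching with at least b OPT >= (b - 1) OPT edges. *)

Lemma exists_ge_mean (R : realDomainType) (I : finType) (w f : I -> R) :
  (forall i, 0 <= w i) -> \sum_i w i = 1 ->
  exists2 i, 0 < w i & \sum_j w j * f j <= f i.
Proof.
move=> w_ge0 w_sum1.
have [i0 w_i0] : exists i, 0 < w i.
  apply/existsP; apply: contraT; rewrite negb_exists => /forallP w_le0.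
  move: w_sum1; rewrite big1 => [/eqP|i _]; first by rewrite eq_sym oner_eq0.
  by apply/eqP; rewrite eq_le w_ge0 andbT leNgt w_le0.
case: (@arg_maxP _ _ _ i0 (fun i => 0 < w i) f w_i0) => i w_i f_max.
exists i => //; rewrite -[f i]mul1r -w_sum1 mulr_suml ler_sum // => j _.
have [w_j|w_le0] := ltP 0 (w j).
  by apply: ler_wpM2l; [exact: ltW | exact: f_max].
have -> : w j = 0 by apply/le_anti; rewrite w_le0 w_ge0.
by rewrite !mul0r.
Qed.

Lemma card_bigcup_labelled (T J : finType) (lab : T -> J) (P : pred J)
    (K : J -> {set T}) :
  (forall j, K j \subset [set x | lab x == j]) ->
  #|\bigcup_(j | P j) K j| = (\sum_(j | P j) #|K j|)%N.
Proof.
move=> K_lab; rewrite -sum1_card (partition_big lab P) => [|x /bigcupP[j Pj]].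
  apply: eq_bigr => j Pj; rewrite -sum1_card; apply: eq_bigl => x.
  apply/andP/idP => [[/bigcupP[k Pk xK] /eqP lab_x]|xK].
    by move: (subsetP (K_lab k) x xK); rewrite inE lab_x => /eqP ->.
  by split; [apply/bigcupP; exists j | move: (subsetP (K_lab j) x xK); rewrite inE].
by move=> /(subsetP (K_lab j)); rewrite inE => /eqP ->.
Qed.

Definition max_matching (V : finType) (S : {set {set V}}) : {set {set V}} :=
  [arg max_(N > set0 | (N \subset S) && is_matching N) #|N|].

Lemma max_matchingP (V : finType) (S : {set {set V}}) :
  [/\ max_matching S \subset S, is_matching (max_matching S) &
      #|max_matching S| = mu S].
Proof.
have matching0 : (set0 \subset S) && is_matching (set0 : {set {set V}}).
  rewrite sub0set; apply/forallP => v.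
  by rewrite (eq_card0 (fun e => _)) // => e; rewrite !inE.
rewrite /mu (bigop.bigmax_eq_arg set0) // /max_matching.
by case: arg_maxnP => // N /andP[].
Qed.

Lemma bmatching_bigcup_labelled (V J : finType) (lab : {set V} -> J) (P : pred J)
    (K : J -> {set {set V}}) :
  (forall j, K j \subset [set e | lab e == j]) ->
  (forall j, P j -> is_matching (K j)) ->
  is_bmatching #|P| (\bigcup_(j | P j) K j).
Proof.
move=> K_lab K_matching; apply/forallP => v.
pose Kv j := [set e in K j | v \in e].
have -> : [set e in \bigcup_(j | P j) K j | v \in e] = \bigcup_(j | P j) Kv j.
  apply/setP => e; rewrite inE; apply/andP/bigcupP => [[/bigcupP[j Pj eK] ve]|[j Pj]].
    by exists j; rewrite // inE eK.
  by rewrite inE => /andP[eK ve]; split; first by apply/bigcupP; exists j.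
rewrite (@card_bigcup_labelled _ _ lab) => [|j]; last first.
  by apply: subset_trans (K_lab j); apply/subsetP => e; rewrite inE => /andP[].
rewrite -sum1_card; apply: leq_sum => j Pj.
exact: (forallP (K_matching j Pj) v).
Qed.

Section RandomLabelling.

Variables (R : numDomainType) (T : finType) (E : {set T}) (b : nat) (p : R).

Definition subgraph_weight (S : {set T}) : R :=
  p ^+ #|S| * (1 - p) ^+ (#|E| - #|S|).

Lemma subgraph_weight_ge0 S : 0 <= p <= 1 -> 0 <= subgraph_weight S.
Proof. by case/andP=> p_ge0 p_le1; rewrite mulr_ge0 ?exprn_ge0 ?subr_ge0. Qed.

Definition label_prob (e : T) (j : 'I_b.+1) : R :=
  if e \in E then (if j == ord0 then 1 - b%:R * p else p) else (j == ord0)%:R.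

Definition labelling_weight (l : {ffun T -> 'I_b.+1}) : R :=
  \prod_e label_prob e (l e).

Definition label_class (l : {ffun T -> 'I_b.+1}) (j : 'I_b.+1) : {set T} :=
  [set e | l e == j].

Lemma sum_label_prob e : \sum_j label_prob e j = 1.
Proof.
rewrite big_ord_recl /label_prob; case: (e \in E) => /=.
  by rewrite sumr_const card_ord mulr_natl subrK.
by rewrite big1 ?addr0.
Qed.

Lemma sum_labelling_weight : \sum_l labelling_weight l = 1.
Proof. by rewrite -bigA_distr_bigA big1 // => e _; apply: sum_label_prob. Qed.

Lemma labelling_weight_ge0 l :
  0 <= p -> b%:R * p <= 1 -> 0 <= labelling_weight l.
Proof.
move=> p_ge0 bp_le1; apply: prodr_ge0 => e _; rewrite /label_prob.
by case: (e \in E); case: (_ == _); rewrite ?subr_ge0 ?ler0n.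
Qed.

Lemma label_class_subset l j :
  0 < labelling_weight l -> j != ord0 -> label_class l j \subset E.
Proof.
move=> w_gt0 j_neq0; apply/subsetP => e; rewrite inE => /eqP l_e.
apply: contraLR w_gt0 => e_notin_E.
rewrite /labelling_weight (bigD1 e) //= /label_prob (negbTE e_notin_E) l_e.
by rewrite (negbTE j_neq0) mul0r ltxx.
Qed.

Definition keep_prob (S : {set T}) (e : T) : R :=
  if e \in E then (if e \in S then p else 1 - p) else (e \notin S)%:R.

Lemma prod_keep_prob S :
  \prod_e keep_prob S e = if S \subset E then subgraph_weight S else 0.
Proof.
case: ifPn => [SE|/subsetPn[e eS eNE]]; last first.
  by rewrite (bigD1 e) //= /keep_prob eS (negbTE eNE) mul0r.
rewrite (eq_bigr (fun e => (if e \in S then p else 1) *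
                           (if e \in E :\: S then 1 - p else 1))); last first.
  move=> e _; rewrite /keep_prob inE.
  by case: ifP => [eE|/(contraFF (subsetP SE e)) ->]; case: (e \in S); rewrite ?mulr1 ?mul1r.
rewrite big_split /= -!big_mkcond /= !prodr_const cardsD.
by rewrite (setIidPr SE).
Qed.

Lemma sum_label_prob_class e j (S : {set T}) : j != ord0 ->
  \sum_k label_prob e k * ((k == j) == (e \in S))%:R = keep_prob S e.
Proof.
move=> j_neq0; rewrite (bigD1 j) //= eqxx.
have other_labels : \sum_(k | k != j) label_prob e k = 1 - label_prob e j.
  by have := sum_label_prob e; rewrite (bigD1 j) //= => <-; rewrite addrC addrK.
rewrite /keep_prob; case: (boolP (e \in S)) => eS /=.
  rewrite mulr1 big1 ?addr0 => [|k /negbTE ->]; last by rewrite mulr0.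
  by rewrite /label_prob (negbTE j_neq0); case: (e \in E).
rewrite mulr0 add0r (eq_bigr (label_prob e)) => [|k /negbTE ->]; last by rewrite mulr1.
by rewrite other_labels /label_prob (negbTE j_neq0); case: (e \in E); rewrite ?subr0.
Qed.

Lemma label_class_eqE l j (S : {set T}) :
  (label_class l j == S)%:R = \prod_e ((l e == j) == (e \in S))%:R :> R.
Proof.
case: (boolP [forall e, (l e == j) == (e \in S)]) => [/forallP l_S|/forallPn[e l_Se]].
  have -> : label_class l j = S by apply/setP => e; rewrite inE (eqP (l_S e)).
  by rewrite eqxx big1 // => e _; rewrite l_S.
rewrite (bigD1 e) //= (negbTE l_Se) mul0r; case: eqP => // class_S.
by move: l_Se; rewrite -class_S inE eqxx.
Qed.

Lemma sum_labelling_weight_class j (S : {set T}) : j != ord0 ->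
  \sum_l labelling_weight l * (label_class l j == S)%:R =
  if S \subset E then subgraph_weight S else 0.
Proof.
move=> j_neq0.
under eq_bigr => l _ do rewrite label_class_eqE -big_split /=.
rewrite -(bigA_distr_bigA (fun e k => label_prob e k * ((k == j) == (e \in S))%:R)).
by rewrite -prod_keep_prob; apply: eq_bigr => e _; apply: sum_label_prob_class.
Qed.

Lemma label_class_marginal j (g : {set T} -> R) : j != ord0 ->
  \sum_l labelling_weight l * g (label_class l j) =
  \sum_(S : {set T} | S \subset E) subgraph_weight S * g S.
Proof.
move=> j_neq0; rewrite (partition_big (label_class^~ j) predT) //=.
rewrite [RHS]big_mkcond /=; apply: eq_bigr => S _.
have -> : \sum_(l | label_class l j == S) labelling_weight l * g (label_class l j) =
          (\sum_l labelling_weight l * (label_class l j == S)%:R) * g S.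
  rewrite big_mkcond mulr_suml; apply: eq_bigr => l _.
  by case: eqP => [->|_]; rewrite ?mulr1 ?mulr0 ?mul0r.
by rewrite sum_labelling_weight_class //; case: ifP; rewrite ?mul0r.
Qed.

Lemma mean_sum_label_classes (g : {set T} -> R) :
  \sum_l labelling_weight l * \sum_(j | j != ord0) g (label_class l j) =
  b%:R * \sum_(S : {set T} | S \subset E) subgraph_weight S * g S.
Proof.
under eq_bigr do rewrite mulr_sumr; rewrite exchange_big /=.
rewrite (eq_bigr _ (fun j => label_class_marginal g)).
by rewrite sumr_const cardC1 card_ord mulr_natl.
Qed.

End RandomLabelling.

Lemma truncn_inv_mul_le1 (R : archiRealFieldType) (p : R) :
  0 < p -> (Num.truncn p^-1)%:R * p <= 1.
Proof.
move=> p_gt0; have : (Num.truncn p^-1)%:R <= p^-1 by rewrite truncn_le invr_ge0 ltW.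
by rewrite -(ler_pM2r p_gt0) mulVf ?lt0r_neq0.
Qed.

Theorem mainTheorem4 (R : archiRealFieldType) (V : finType) (E : {set {set V}})
  (p : R) :
  simple_graph E -> 0 < p -> p < 1 ->
  let b := Num.truncn (p^-1) in
  exists M : {set {set V}},
    [/\ M \subset E, is_bmatching b M &
        (b%:R - 1) * expected_mu E p <= (#|M|)%:R].
Proof.
move=> _ p_gt0 p_lt1 b; have bp_le1 := truncn_inv_mul_le1 p_gt0.
pose matched (l : {ffun {set V} -> 'I_b.+1}) :=
  \sum_(j | j != ord0) (mu (label_class l j))%:R : R.
have [? | |l w_l_gt0 l_good] := @exists_ge_mean _ _ (labelling_weight E p) matched.
- by apply: labelling_weight_ge0 => //; apply: ltW.
- exact: sum_labelling_weight.
rewrite /matched (@mean_sum_label_classes _ _ E b p (fun S => (mu S)%:R)) in l_good.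
pose K j := max_matching (label_class l j).
have K_lab j : K j \subset label_class l j by case: (max_matchingP (label_class l j)).
exists (\bigcup_(j | j != ord0) K j); split.
- apply/bigcupsP => j j_neq0.
  exact: subset_trans (K_lab j) (label_class_subset w_l_gt0 j_neq0).
- have := @bmatching_bigcup_labelled _ _ l (predC1 ord0) K K_lab.
  rewrite cardC1 card_ord; apply=> j _.
  by case: (max_matchingP (label_class l j)).
- rewrite (@card_bigcup_labelled _ _ l) // natr_sum.
  rewrite (eq_bigr (fun j => (mu (label_class l j))%:R)) => [|j _]; last first.
    by case: (max_matchingP (label_class l j)) => _ _ ->.
  apply: le_trans l_good; rewrite ler_wpM2r ?gerBl //.
  by apply: sumr_ge0 => S _; rewrite mulr_ge0 ?ler0n ?subgraph_weight_ge0 ?ltW.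
Qed.
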